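(* Let $N$ be the Iwasawa N-group of a real simple Lie group of real rank one, i.e. $N$ is one of: the abelian Lie group $\mathbb{R}^n$, a $(2n+1)$-dimensional Heisenberg group, a $(4n+3)$-dimensional quaternionic Heisenberg group, or the $15$-dimensional octonionic Heisenberg group. Then $N$ satisfies the partial automatic continuity. More precisely, for every abstract (not necessarily continuous) group automorphism $F$ of $N$ there exist a central automorphism $\mu$ of $N$ and a Lie group automorphism $\overline{F}$ of $N$ such that $F=\mu\circ\overline{F}$.
   Context: For a real simple Lie group $G$ with Iwasawa decomposition $G=KAN$, the simply connected nilpotent group $N$ is its Iwasawa N-group. A central automorphism of $N$ is an abstract group automorphism $F$ with $x^{-1}F(x)$ in the center of $N$ for all $x\in N$; a Lie group automorphism is a continuous (hence smooth) group automorphism. Field automorphisms of a simply connected nilpotent Lie group $N$ with Lie algebra $\mathcal{N}$: if $\mathcal{N}=\mathcal{N}_1\oplus\cdots\oplus\mathcal{N}_k$ is a direct sum of ideals, for each $\mathcal{N}_i$ that is the realification of a complex Lie algebra choose a $\mathbb{C}$-basis $e_1,\dots,e_m$ and a field automorphism $\varphi$ of $\mathbb{C}$ fixing the structure constants and let $\sigma_i(\sum x_le_l)=\sum\varphi(x_l)e_l$, otherwise $\sigma_i=\mathrm{id}$; then $\exp\circ(\sigma_1\times\cdots\times\sigma_k)\circ\exp^{-1}$ is a field automorphism. $N$ satisfies the partial automatic continuity if every abstract group automorphism has the form $\mu\circ\overline{F}\circ\Phi$ with $\mu$ central, $\overline{F}$ a Lie group automorphism, $\Phi$ a field automorphism.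 *)

From HB Require Import structures.
From mathcomp Require Import all_boot all_order all_algebra.
From mathcomp Require Import all_classical all_reals all_analysis.
Set Implicit Arguments. Unset Strict Implicit. Unset Printing Implicit Defensive.
Import Order.TTheory GRing.Theory Num.Theory.
Import numFieldNormedType.Exports.
Local Open Scope ring_scope.

Section GroupNotions.
Variable T : Type.
Variables (mul : T -> T -> T) (inv : T -> T).

Definition group_aut (F : T -> T) : Prop :=
  bijective F /\ forall x y, F (mul x y) = mul (F x) (F y).

Definition in_center (c : T) : Prop := forall y, mul c y = mul y c.

Definition central_aut (F : T -> T) : Prop :=
  group_aut F /\ forall x, in_center (mul (inv x) (F x)).
End GroupNotions.

Definition lie_aut (T : topologicalType) (mul : T -> T -> T) (F : T -> T) : Prop :=
  group_aut mul F /\ continuous F.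

Definition aut_central_times_lie (T : topologicalType)
    (mul : T -> T -> T) (inv : T -> T) : Prop :=
  forall F : T -> T, group_aut mul F ->
    exists mu Fbar : T -> T,
      central_aut mul inv mu /\ lie_aut mul Fbar /\ F = mu \o Fbar.

(* For a Lie algebra V (+) Z with [v,w] = b v w (b skew, values in the
   center Z), the group law in exponential coordinates (BCH) is
   (v,z)(v',z') = (v+v', z+z'+ 1/2 b(v,v')). *)
Section Nil2.
Variable R : realType.
Variables (V Z : lmodType R) (b : V -> V -> Z).
Definition nil2_mul (x y : V * Z) : V * Z :=
  (x.1 + y.1, x.2 + y.2 + 2^-1 *: b x.1 y.1).
Definition nil2_inv (x : V * Z) : V * Z := (- x.1, - x.2).
End Nil2.

Section Brackets.
Variable R : realType.

Definition imag k (p : 'rV[R]_k.+1) : 'rV[R]_k := \row_(j < k) p 0 (lift ord0 j).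

(* quaternions as 'rV_4 = a0 + a1 i + a2 j + a3 k *)
Definition qc (p : 'rV[R]_4) (k : nat) : R := p 0 (inord k).
Definition qmul (p q : 'rV[R]_4) : 'rV[R]_4 :=
  \row_(j < 4) [:: qc p 0 * qc q 0 - qc p 1 * qc q 1 - qc p 2 * qc q 2 - qc p 3 * qc q 3;
                   qc p 0 * qc q 1 + qc p 1 * qc q 0 + qc p 2 * qc q 3 - qc p 3 * qc q 2;
                   qc p 0 * qc q 2 - qc p 1 * qc q 3 + qc p 2 * qc q 0 + qc p 3 * qc q 1;
                   qc p 0 * qc q 3 + qc p 1 * qc q 2 - qc p 2 * qc q 1 + qc p 3 * qc q 0]`_j.
Definition qconj (p : 'rV[R]_4) : 'rV[R]_4 :=
  \row_(j < 4) (if (j == 0 :> nat) then p 0 j else - p 0 j).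

(* octonions as 'rV_8 = pairs (a,b) of quaternions, Cayley--Dickson:
   (a,b)(c,d) = (ac - conj(d) b, da + b conj(c)), conj(a,b) = (conj a, -b) *)
Definition ofst (x : 'rV[R]_8) : 'rV[R]_4 := \row_(j < 4) x 0 (inord j).
Definition osnd (x : 'rV[R]_8) : 'rV[R]_4 := \row_(j < 4) x 0 (inord (j + 4)).
Definition omk (a b : 'rV[R]_4) : 'rV[R]_8 :=
  \row_(j < 8) (if (j < 4)%N then a 0 (inord j) else b 0 (inord (j - 4))).
Definition omul (x y : 'rV[R]_8) : 'rV[R]_8 :=
  omk (qmul (ofst x) (ofst y) - qmul (qconj (osnd y)) (osnd x))
      (qmul (osnd y) (ofst x) + qmul (osnd x) (qconj (ofst y))).
Definition oconj (x : 'rV[R]_8) : 'rV[R]_8 := omk (qconj (ofst x)) (- osnd x).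

Definition bracket_abelian n (v w : 'rV[R]_n) : 'rV[R]_0 := 0.
(* Heisenberg, V = R^{2n} = 'M_(n,2) (rows (x_i,y_i)), Z = R *)
Definition bracket_heis n (v w : 'M[R]_(n, 2)) : 'rV[R]_1 :=
  \row_(j < 1) \sum_(i < n) (v i ord0 * w i ord_max - v i ord_max * w i ord0).
(* quaternionic Heisenberg, V = H^n = 'M_(n,4), Z = Im H = R^3 *)
Definition bracket_qheis n (v w : 'M[R]_(n, 4)) : 'rV[R]_3 :=
  imag (\sum_(i < n) qmul (qconj (row i v)) (row i w)).
(* octonionic Heisenberg, V = O = R^8, Z = Im O = R^7 *)
Definition bracket_oheis (v w : 'rV[R]_8) : 'rV[R]_7 := imag (omul (oconj v) w).
End Brackets.

Notation N_abelian R n := ('rV[R]_n * 'rV[R]_0)%type.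
Notation N_heis R n := ('M[R]_(n, 2) * 'rV[R]_1)%type.
Notation N_qheis R n := ('M[R]_(n, 4) * 'rV[R]_3)%type.
Notation N_oheis R := ('rV[R]_8 * 'rV[R]_7)%type.

Definition mul_abelian (R : realType) n : N_abelian R n -> N_abelian R n -> N_abelian R n :=
  nil2_mul (@bracket_abelian R n).
Definition inv_abelian (R : realType) n : N_abelian R n -> N_abelian R n := @nil2_inv R _ _.
Definition mul_heis (R : realType) n : N_heis R n -> N_heis R n -> N_heis R n :=
  nil2_mul (@bracket_heis R n).
Definition inv_heis (R : realType) n : N_heis R n -> N_heis R n := @nil2_inv R _ _.
Definition mul_qheis (R : realType) n : N_qheis R n -> N_qheis R n -> N_qheis R n :=
  nil2_mul (@bracket_qheis R n).
Definition inv_qheis (R : realType) n : N_qheis R n -> N_qheis R n := @nil2_inv R _ _.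
Definition mul_oheis (R : realType) : N_oheis R -> N_oheis R -> N_oheis R :=
  nil2_mul (@bracket_oheis R).
Definition inv_oheis (R : realType) : N_oheis R -> N_oheis R := @nil2_inv R _ _.

From HB Require Import structures.
From mathcomp Require Import all_boot all_order all_algebra.
From mathcomp Require Import all_classical all_reals all_analysis.
From mathcomp Require Import ring lra.
Import numFieldNormedType.Exports.
Set Implicit Arguments. Unset Strict Implicit. Unset Printing Implicit Defensive.
Import Order.TTheory GRing.Theory Num.Theory.
Local Open Scope ring_scope.

(* Each group is V x Z with (v, z)(v', z') = (v + v', z + z' + 1/2 b v v'), where
   b v w = Im (sum_i conj (v i) * w i) over K = C, H or O (the abelian case is
   trivial: every automorphism is central).  As b is nondegenerate, the center is
   0 x Z, so an abstract automorphism F preserves it and induces additive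
   bijections A of V = N/Z and phi of Z with phi (b v w) = b (A v) (A w).  The
   annihilator of v in such a bracket determines the line R v, hence A maps lines
   to lines; the scalars by which it does so form a ring endomorphism of R, which
   is the identity.  So A and phi are linear, Fbar = (A, phi) is a continuous
   automorphism, and F \o Fbar^-1 moves every element only along the center. *)

Section GroupAutomorphisms.
Variables (T : Type) (mul : T -> T -> T).

Lemma group_aut_comp F G :
  group_aut mul F -> group_aut mul G -> group_aut mul (F \o G).
Proof.
move=> [Fbij Fm] [Gbij Gm]; split; first exact: bij_comp.
by move=> x y /=; rewrite Gm Fm.
Qed.

Lemma group_aut_inverse F G :
  group_aut mul F -> cancel F G -> cancel G F -> group_aut mul G.
Proof.
move=> [_ Fm] FK GK; split; first by exists F.
by move=> x y; apply: (can_inj FK); rewrite Fm !GK.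
Qed.

Lemma group_aut_center F x :
  group_aut mul F -> in_center mul (F x) <-> in_center mul x.
Proof.
move=> [[G FK GK] Fm]; split=> cx y; first by apply: (can_inj FK); rewrite !Fm cx.
by rewrite -(GK y) -!Fm cx.
Qed.

End GroupAutomorphisms.

Lemma abelian_aut_central_times_lie (T : topologicalType) (mul : T -> T -> T) inv :
  (forall x y, mul x y = mul y x) -> aut_central_times_lie mul inv.
Proof.
move=> mulC F hF; exists F, id; split; first by split=> // x y; apply: mulC.
split=> //; split; last by move=> x; exact: cvg_id.
by split=> //; exists id.
Qed.

Lemma real_ring_endo_id (R : realType) (s : R -> R) :
  {morph s : x y / x + y} -> {morph s : x y / x * y} -> s 1 = 1 -> s =1 id.
Proof.
move=> sD sM s1.
have s0 : s 0 = 0 by apply: (addrI (s 0)); rewrite -sD !addr0.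
have sN x : s (- x) = - s x by apply: (addrI (s x)); rewrite -sD !subrr.
have s_nat n : s n%:R = n%:R.
  by elim: n => [|n IH]; rewrite ?s0 // -addn1 !natrD sD IH s1.
have s_int (m : int) : s m%:~R = m%:~R.
  by case: m => n; rewrite ?NegzE ?mulrNz ?sN s_nat.
have s_mono x y : x <= y -> s x <= s y.
  rewrite -subr_ge0 => /sqr_sqrtr yx.
  by rewrite -subr_ge0 -sN -sD -yx expr2 sM -expr2 sqr_ge0.
move=> x; apply/eqP; apply: contraT => sx_neq.
have d_gt0 : 0 < `|s x - x| by rewrite normr_gt0 subr_eq0.
pose k := (Num.truncn `|s x - x|^-1).+1.
have k_big : 1 < k%:R * `|s x - x|.
  rewrite -ltr_pdivrMr // div1r.
  have inv_ge0 : 0 <= `|s x - x|^-1 by rewrite invr_ge0 ltW.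
  by have /andP[_ ->] := truncn_itv inv_ge0.
pose m := Num.floor (k%:R * x).
(* [s] is monotone and fixes [m] and [k]: [k * s x] and [k * x] lie in [m, m + 1]. *)
have lo : m%:~R <= k%:R * s x.
  by rewrite -(s_int m) -(s_nat k) -sM s_mono // floor_le.
have hi : k%:R * s x <= (m + 1)%:~R.
  by rewrite -(s_int (m + 1)) -(s_nat k) -sM s_mono // ltW // floorD1_gt.
have := floor_le (k%:R * x); have := floorD1_gt (k%:R * x).
rewrite -/m intrD in hi * => x_hi x_lo.
have : `|k%:R * s x - k%:R * x| <= 1 by rewrite ler_norml; apply/andP; split; lra.
by rewrite -mulrBr normrM normr_nat leNgt k_big.
Qed.

Lemma linear_mx_continuous (R : realType) m n p q (f : 'M[R]_(m, n) -> 'M[R]_(p, q)) :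
  (forall a x y, f (a *: x + y) = a *: f x + f y) -> continuous f.
Proof.
move=> f_lin.
have f0 : f 0 = 0.
  by have /eqP := f_lin 1 0 0; rewrite !scale1r !addr0 -subr_eq subrr eq_sym => /eqP.
have fD x y : f (x + y) = f x + f y by rewrite -(scale1r x) f_lin !scale1r.
have fZ a x : f (a *: x) = a *: f x by rewrite -(addr0 (a *: x)) f_lin f0 addr0.
have f_sum (I : Type) (r : seq I) (g : I -> 'M[R]_(m, n)) :
    f (\sum_(i <- r) g i) = \sum_(i <- r) f (g i).
  by elim: r => [|i r IH]; rewrite ?big_nil ?f0 // !big_cons fD IH.
have -> : f = fun x => \sum_(i < m) \sum_(j < n) x i j *: f (delta_mx i j).
  apply: funext => x; rewrite {1}(matrix_sum_delta x) f_sum.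
  by apply: eq_bigr => i _; rewrite f_sum; apply: eq_bigr => j _; rewrite fZ.
apply: continuous_big => [|i _]; first exact: add_continuous.
apply: continuous_big => [|j _]; first exact: add_continuous.
by move=> x; apply: continuousZr_tmp; exact: coord_continuous.
Qed.

Lemma continuous_prod_map (T1 T2 U1 U2 : topologicalType) (f : T1 -> U1) (g : T2 -> U2) :
  continuous f -> continuous g -> continuous (fun x : T1 * T2 => (f x.1, g x.2)).
Proof.
move=> f_cont g_cont x; apply: cvg_pair.
  by apply: (continuous_comp (f := fst)); [exact: cvg_fst | exact: f_cont].
by apply: (continuous_comp (f := snd)); [exact: cvg_snd | exact: g_cont].
Qed.

Lemma half_scaleD (R : numFieldType) (W : lmodType R) (x : W) : 2^-1 *: x + 2^-1 *: x = x.
Proof. by rewrite -scalerDl -[2^-1]mul1r -splitr scale1r. Qed.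

Lemma eq_opp_self0 (R : numFieldType) (W : lmodType R) (x : W) : x = - x -> x = 0.
Proof. by move=> xN; rewrite -(half_scaleD x) {2}xN scalerN subrr. Qed.

Lemma scaler_injr (R : fieldType) (W : lmodType R) (x : W) :
  x != 0 -> injective ( *:%R^~ x).
Proof.
move=> x0 a c /eqP.
by rewrite -subr_eq0 -scalerBl scaler_eq0 (negbTE x0) orbF subr_eq0 => /eqP.
Qed.

Section Brackets.
Variables (R : numFieldType) (V Z : lmodType R) (b : V -> V -> Z).

Definition skew_bilinear :=
  (forall a u v w, b (a *: u + v) w = a *: b u w + b v w) /\ (forall v w, b w v = - b v w).
Definition nondegenerate_bracket := forall v, v != 0 -> exists w, b v w != 0.
Definition annihilator_rigid :=
  forall u v, v != 0 -> (forall w, b v w = 0 -> b u w = 0) -> exists t, u = t *: v.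
Definition bracket_onto := forall z, exists v w, z = b v w.

Hypothesis hb : skew_bilinear.

Lemma bracketC v w : b w v = - b v w. Proof. by case: hb. Qed.

Lemma bracket0l w : b 0 w = 0.
Proof.
case: hb => b_lin _; apply: (addrI (b 0 w)).
by rewrite -{1}(scale1r (b 0 w)) -b_lin scaler0 !addr0.
Qed.

Lemma bracket0r v : b v 0 = 0. Proof. by rewrite bracketC bracket0l oppr0. Qed.

Lemma bracketDl u v w : b (u + v) w = b u w + b v w.
Proof. by case: hb => b_lin _; rewrite -(scale1r u) b_lin !scale1r. Qed.

Lemma bracketZl a u w : b (a *: u) w = a *: b u w.
Proof. by case: hb => b_lin _; rewrite -(addr0 (a *: u)) b_lin bracket0l addr0. Qed.

Lemma bracketDr u v w : b u (v + w) = b u v + b u w.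
Proof. by rewrite bracketC bracketDl !(bracketC u) opprD !opprK. Qed.

Lemma bracketZr a u w : b u (a *: w) = a *: b u w.
Proof. by rewrite bracketC bracketZl -scalerN -bracketC. Qed.

Lemma bracketNr u w : b u (- w) = - b u w.
Proof. by rewrite -scaleN1r bracketZr scaleN1r. Qed.

Lemma bracketvv v : b v v = 0.
Proof. exact/eq_opp_self0/bracketC. Qed.

End Brackets.

Section Nil2Automorphisms.
Variables (R : realType) (V Z : lmodType R) (b : V -> V -> Z).
Hypotheses (hb : skew_bilinear b) (b_nondeg : nondegenerate_bracket b).
Hypotheses (b_rigid : annihilator_rigid b) (b_onto : bracket_onto b).
Local Notation mul := (nil2_mul b).

Lemma nil2_mul_split x : mul (x.1, 0) (0, x.2) = x.
Proof. by rewrite /nil2_mul /= (bracket0r hb) scaler0 !addr0 add0r -surjective_pairing. Qed.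

Lemma nil2_centerP x : in_center mul x <-> x.1 = 0.
Proof.
split=> [cx | x1 y]; last first.
  rewrite /nil2_mul x1 (bracket0l hb) (bracket0r hb) scaler0 !addr0 add0r.
  by congr (_, _); rewrite addrC.
have bx w : b x.1 w = 0.
  have := congr1 snd (cx (w, 0)).
  rewrite /nil2_mul /= addr0 add0r (bracketC hb x.1 w) scalerN => /addrI/eq_opp_self0/eqP.
  by rewrite scaler_eq0 invr_eq0 pnatr_eq0 /= => /eqP.
by have [//|/b_nondeg [w]] := eqVneq x.1 0; rewrite bx eqxx.
Qed.

Section InducedMaps.
Variable F : V * Z -> V * Z.
Hypothesis hF : group_aut mul F.

Definition quotient_map v := (F (v, 0)).1.
Definition center_map z := (F (0, z)).2.

Lemma aut_center z : F (0, z) = (0, center_map z).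
Proof.
have /nil2_centerP : in_center mul (F (0, z)) by apply/(group_aut_center _ hF)/nil2_centerP.
by rewrite /center_map; case: (F (0, z)) => _ ? /= ->.
Qed.

Lemma aut_fst x : (F x).1 = quotient_map x.1.
Proof. by rewrite -{1}(nil2_mul_split x); case: hF => _ ->; rewrite aut_center /= addr0. Qed.

Lemma quotient_mapD : {morph quotient_map : u v / u + v}.
Proof. by move=> u v; have := aut_fst (mul (u, 0) (v, 0)); case: hF => _ -> /= <-. Qed.

Lemma center_mapD : {morph center_map : y z / y + z}.
Proof.
move=> y z; have yz : (0, y + z) = mul (0, y) (0, z).
  by rewrite /nil2_mul /= (bracket0l hb) scaler0 !addr0.
by rewrite /center_map yz; case: hF => _ ->; rewrite !aut_center /= (bracket0l hb) scaler0 addr0.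
Qed.

Lemma quotient_map0 : quotient_map 0 = 0.
Proof. by apply: (addrI (quotient_map 0)); rewrite -quotient_mapD !addr0. Qed.

Lemma center_map0 : center_map 0 = 0.
Proof. by apply: (addrI (center_map 0)); rewrite -center_mapD !addr0. Qed.

(* The commutator of [(v, 0)] and [(w, 0)] is the central element [(0, b v w)]. *)
Lemma center_map_bracket v w : center_map (b v w) = b (quotient_map v) (quotient_map w).
Proof.
have comm : mul (v, 0) (w, 0) = mul (mul (w, 0) (v, 0)) (0, b v w).
  rewrite /nil2_mul /= (bracket0r hb) scaler0 !addr0 !add0r (bracketC hb v w).
  by congr (_, _); [rewrite addrC | rewrite scalerN addrC -{2}(half_scaleD (b v w)) addrK].
move: (congr1 (fun x => (F x).2) comm); case: hF => _ Fm; rewrite !Fm aut_center /=.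
rewrite -/(quotient_map v) -/(quotient_map w) (bracket0r hb) scaler0 addr0.
rewrite (bracketC hb (quotient_map v)) scalerN (addrC (F (w, 0)).2) -!addrA.
by move=> /addrI/addrI/eqP; rewrite eq_sym addrC subr_eq half_scaleD => /eqP.
Qed.

Lemma quotient_map_eq0 v : quotient_map v = 0 -> v = 0.
Proof.
move=> Fv0; have /nil2_centerP // : in_center mul (v, 0).
exact/(group_aut_center _ hF)/nil2_centerP.
Qed.

Lemma quotient_map_neq0 v : v != 0 -> quotient_map v != 0.
Proof. by apply: contra_neq; apply: quotient_map_eq0. Qed.

Lemma center_map_eq0 z : center_map z = 0 -> z = 0.
Proof.
move=> Fz0; have /(bij_inj hF.1) [] // : F (0, z) = F (0, 0).
by rewrite !aut_center Fz0 center_map0.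
Qed.

Lemma quotient_map_onto w : exists v, quotient_map v = w.
Proof. by case: hF => [[G _ GK] _]; exists (G (w, 0)).1; rewrite -aut_fst GK. Qed.

Lemma quotient_map_line v t :
  v != 0 -> exists s, quotient_map (t *: v) = s *: quotient_map v.
Proof.
move=> v0; apply: b_rigid; first exact: quotient_map_neq0.
move=> w'; have [w <-] := quotient_map_onto w'.
rewrite -!center_map_bracket => /center_map_eq0 bvw0.
by rewrite (bracketZl hb) bvw0 scaler0 center_map0.
Qed.

(* The scalars by which [quotient_map] acts on the lines through [v] and
   [w], where [b v w != 0], form a ring endomorphism of [R]. *)
Lemma quotient_mapZ a v : quotient_map (a *: v) = a *: quotient_map v.
Proof.
have [->|v0] := eqVneq v 0; first by rewrite scaler0 quotient_map0 scaler0.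
have [w bvw] := b_nondeg v0.
have w0 : w != 0 by apply: contraNneq bvw => ->; rewrite (bracket0r hb).
have [s sE] := choice (fun t => quotient_map_line t v0).
have [s' s'E] := choice (fun t => quotient_map_line t w0).
have qv0 := quotient_map_neq0 v0.
have qvw0 : b (quotient_map v) (quotient_map w) != 0.
  by rewrite -center_map_bracket; apply: contra_neq bvw; apply: center_map_eq0.
have sM c d : s (c * d) = s c * s' d.
  apply: (scaler_injr qvw0).
  have : b (quotient_map ((c * d) *: v)) (quotient_map w) =
         b (quotient_map (c *: v)) (quotient_map (d *: w)).
    by rewrite -!center_map_bracket (bracketZl hb) (bracketZr hb) (bracketZl hb) scalerA mulrC.
  by rewrite !sE s'E (bracketZl hb) (bracketZr hb) (bracketZl hb) scalerA => ->; rewrite mulrC.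
have s1 : s 1 = 1 by apply: (scaler_injr qv0); rewrite -sE !scale1r.
have s'_s d : s' d = s d by have := sM 1 d; rewrite s1 !mul1r => ->.
have sD : {morph s : c d / c + d}.
  by move=> c d; apply: (scaler_injr qv0); rewrite -sE (scalerDl v) quotient_mapD !sE scalerDl.
by rewrite sE (real_ring_endo_id sD _ s1) // => c d; rewrite sM s'_s.
Qed.

Lemma center_mapZ a z : center_map (a *: z) = a *: center_map z.
Proof.
have [v [w ->]] := b_onto z.
by rewrite -(bracketZl hb) !center_map_bracket quotient_mapZ (bracketZl hb).
Qed.

End InducedMaps.

Definition lie_part (F : V * Z -> V * Z) x := (quotient_map F x.1, center_map F x.2).

Lemma lie_partK F G : group_aut mul F -> cancel F G -> cancel G F ->
  cancel (lie_part F) (lie_part G).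
Proof.
move=> hF FK GK [v z]; have hG := group_aut_inverse hF FK GK.
rewrite /lie_part /=; congr (_, _); first by rewrite -(aut_fst hG) FK.
by rewrite {1}/center_map -(aut_center hF) FK.
Qed.

Lemma lie_part_aut F : group_aut mul F -> group_aut mul (lie_part F).
Proof.
move=> hF; split.
  have [G FK GK] := hF.1; have hG := group_aut_inverse hF FK GK.
  by exists (lie_part G); apply: lie_partK.
move=> x y; rewrite /lie_part /nil2_mul /=.
by rewrite (quotient_mapD hF) !(center_mapD hF) (center_mapZ hF) (center_map_bracket hF).
Qed.

Lemma lie_part_central F G : group_aut mul F -> cancel F G -> cancel G F ->
  central_aut mul (@nil2_inv R V Z) (F \o lie_part G).
Proof.
move=> hF FK GK; have hG := group_aut_inverse hF FK GK.
split; first exact: (group_aut_comp hF (lie_part_aut hG)).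
move=> x; apply/nil2_centerP; rewrite /nil2_inv /nil2_mul /= (aut_fst hF) /=.
by have /(congr1 fst) /= -> := lie_partK hG GK FK x; rewrite addNr.
Qed.

End Nil2Automorphisms.

Theorem nil2_aut_central_times_lie (R : realType) m1 n1 m2 n2
    (b : 'M[R]_(m1, n1) -> 'M[R]_(m1, n1) -> 'M[R]_(m2, n2)) :
  skew_bilinear b -> nondegenerate_bracket b -> annihilator_rigid b -> bracket_onto b ->
  aut_central_times_lie (nil2_mul b) (@nil2_inv R _ _).
Proof.
move=> hb b_nondeg b_rigid b_onto F hF; have [G FK GK] := hF.1.
exists (F \o lie_part G), (lie_part F); split; last split.
- exact (lie_part_central hb b_nondeg b_rigid b_onto hF FK GK).
- split; first exact (lie_part_aut hb b_nondeg b_rigid b_onto hF).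
  apply: continuous_prod_map; apply: linear_mx_continuous => a u v.
    by rewrite (quotient_mapD hb b_nondeg hF) (quotient_mapZ hb b_nondeg b_rigid hF).
  by rewrite (center_mapD hb b_nondeg hF) (center_mapZ hb b_nondeg b_rigid b_onto hF).
- by apply: funext => x /=; rewrite (lie_partK hb b_nondeg hF FK GK).
Qed.

Section RowBrackets.
Variables (R : numFieldType) (n k : nat) (Z : lmodType R).
Variable beta : 'rV[R]_k -> 'rV[R]_k -> Z.
Hypothesis hbeta : skew_bilinear beta.

Definition row_bracket (v w : 'M[R]_(n, k)) : Z := \sum_i beta (row i v) (row i w).

Definition single_row i0 (x : 'rV[R]_k) : 'M[R]_(n, k) := \matrix_i (if i == i0 then x else 0).

Lemma row_bracket_skew_bilinear : skew_bilinear row_bracket.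
Proof.
split=> [a u v w | v w]; rewrite /row_bracket.
  rewrite scaler_sumr -big_split; apply: eq_bigr => i _.
  by rewrite linearP; case: hbeta => ->.
by rewrite -sumrN; apply: eq_bigr => i _; rewrite (bracketC hbeta).
Qed.

Lemma row_bracket_single v i0 x : row_bracket v (single_row i0 x) = beta (row i0 v) x.
Proof.
rewrite /row_bracket (bigD1 i0) //= rowK eqxx big1 ?addr0 // => i ii0.
by rewrite rowK (negbTE ii0) (bracket0r hbeta).
Qed.

Lemma row_neq0 (v : 'M[R]_(n, k)) : v != 0 -> exists i, row i v != 0.
Proof.
apply: contra_neqP => rows0; apply/row_matrixP => i; rewrite row0.
by apply/eqP; apply: contraT => vi; case: rows0; exists i.
Qed.

Variable e : Z.
Hypotheses (e_neq0 : e != 0) (beta_hits : forall r, r != 0 -> exists x, beta r x = e).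
Hypothesis beta_parallel : forall s r, r != 0 -> beta s r = 0 -> exists t, s = t *: r.

Lemma row_bracket_nondegenerate : nondegenerate_bracket row_bracket.
Proof.
move=> v /row_neq0 [i vi]; have [x xE] := beta_hits vi.
by exists (single_row i x); rewrite row_bracket_single xE.
Qed.

Lemma row_bracket_rigid : annihilator_rigid row_bracket.
Proof.
have hrow := row_bracket_skew_bilinear.
move=> u v /row_neq0 [i0 vi0] ann.
have ann_single i x : beta (row i v) x = 0 -> beta (row i u) x = 0.
  by move=> vx0; rewrite -row_bracket_single; apply: ann; rewrite row_bracket_single.
have u_par i : row i v != 0 -> exists t, row i u = t *: row i v.
  move=> vi; apply: beta_parallel vi _; apply: ann_single.
  exact: (bracketvv hbeta).
have u0 i : row i v = 0 -> row i u = 0.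
  move=> vi; apply/eqP; apply: contraT => /beta_hits [x xE].
  by move: e_neq0; rewrite -xE ann_single ?vi ?(bracket0l hbeta) ?eqxx.
have [t0 ti0] := u_par i0 vi0; exists t0; apply/row_matrixP => i; rewrite linearZ /=.
have [vi|vi] := eqVneq (row i v) 0; first by rewrite (u0 i vi) vi scaler0.
have [t ti] := u_par i vi; rewrite ti.
(* Testing [u] against [w] with [row_bracket v w = e - e] shows [t0 *: e = t *: e] *)
have [x0 x0E] := beta_hits vi0; have [x xE] := beta_hits vi.
have := ann (single_row i0 x0 - single_row i x).
rewrite !(bracketDr hrow) !(bracketNr hrow) !row_bracket_single x0E xE subrr => /(_ erefl).
rewrite ti0 ti !(bracketZl hbeta) x0E xE => /eqP.
by rewrite -scalerBl scaler_eq0 (negbTE e_neq0) orbF subr_eq0 => /eqP ->.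
Qed.

Lemma row_bracket_onto : (0 < n)%N -> bracket_onto beta -> bracket_onto row_bracket.
Proof.
move=> n_gt0 beta_onto z; have [p [q ->]] := beta_onto z.
exists (single_row (Ordinal n_gt0) p), (single_row (Ordinal n_gt0) q).
by rewrite row_bracket_single rowK eqxx.
Qed.

End RowBrackets.

Notation rV_seq n s := (\row_(j < n) s`_j).

Section ImaginaryParts.
Variable R : realType.

Definition im_embed n (z : 'rV[R]_n.+1) : 'rV[R]_n.+2 :=
  \row_(j < n.+2) if j : nat is j'.+1 then z 0 (inord j') else 0.

Definition sqnorm n (p : 'rV[R]_n) := \sum_j p 0 j ^+ 2.

Lemma im_embed0 n : im_embed 0 = 0 :> 'rV[R]_n.+2.
Proof. by apply/rowP => j; rewrite !mxE; case: (nat_of_ord j) => // j'; rewrite mxE. Qed.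

Lemma sqnorm_eq0 n (p : 'rV[R]_n) : sqnorm p = 0 -> p = 0.
Proof.
move=> /(psumr_eq0P (fun i _ => sqr_ge0 (p 0 i))) p0; apply/rowP => j.
by apply/eqP; rewrite mxE -sqrf_eq0; apply/eqP/p0.
Qed.

Lemma sqnorm_neq0 n (p : 'rV[R]_n) : p != 0 -> sqnorm p != 0.
Proof. by apply: contra_neq; apply: sqnorm_eq0. Qed.

End ImaginaryParts.

Section ImaginaryBrackets.
Variables (R : realType) (k : nat).
Local Notation K := 'rV[R]_k.+2.
Variables (mul : K -> K -> K) (conj : K -> K).

Definition im_bracket (s r : K) : 'rV[R]_k.+1 := imag (mul (conj s) r).

Local Notation one := (rV_seq k.+2 [:: 1] : K).
Local Notation unit_i := (rV_seq k.+2 [:: 0; 1] : K).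
Local Notation e1 := (rV_seq k.+1 [:: 1] : 'rV[R]_k.+1).

Hypothesis im_bracket_skew_bilinear : skew_bilinear im_bracket.
Hypothesis im_bracket_unit_i : forall r, im_bracket r (mul r unit_i) = sqnorm r *: e1.
Hypothesis mul_conj_decomposition : forall s r,
  sqnorm r *: s = mul (conj s) r 0 ord0 *: r - mul r (im_embed (im_bracket s r)).
Hypothesis mul_r0 : forall r, mul r 0 = 0.
Hypothesis im_bracket_one : forall z, im_bracket one (im_embed z) = z.

Lemma e1_neq0 : e1 != 0.
Proof. by apply/eqP => /rowP/(_ ord0); rewrite !mxE /= => /eqP; rewrite oner_eq0. Qed.

Lemma im_bracket_hits r : r != 0 -> exists x, im_bracket r x = e1.
Proof.
move=> r0; exists ((sqnorm r)^-1 *: mul r unit_i).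
by rewrite (bracketZr im_bracket_skew_bilinear) im_bracket_unit_i scalerA mulVf ?scale1r ?sqnorm_neq0.
Qed.

(* [r * conj (conj s * r) = sqnorm r *: s], so a real [conj s * r] makes [s] a
   multiple of [r]. *)
Lemma im_bracket_parallel s r : r != 0 -> im_bracket s r = 0 -> exists t, s = t *: r.
Proof.
move=> r0 sr0; exists ((sqnorm r)^-1 * mul (conj s) r 0 ord0).
apply: (scalerI (sqnorm_neq0 r0)); rewrite mul_conj_decomposition sr0 im_embed0 mul_r0.
by rewrite subr0 scalerA mulrA mulfV ?mul1r ?sqnorm_neq0.
Qed.

Theorem im_bracket_aut_central_times_lie n : (0 < n)%N ->
  aut_central_times_lie (nil2_mul (row_bracket (n := n) im_bracket)) (@nil2_inv R _ _).
Proof.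
move=> n_gt0; apply: nil2_aut_central_times_lie.
- exact: row_bracket_skew_bilinear.
- exact: row_bracket_nondegenerate e1_neq0 im_bracket_hits.
- exact: row_bracket_rigid e1_neq0 im_bracket_hits im_bracket_parallel.
- apply: row_bracket_onto => // z.
  by exists one, (im_embed z); rewrite im_bracket_one.
Qed.

End ImaginaryBrackets.

Section RowSequences.
Variable R : realType.
Implicit Types s t : seq R.

Lemma rV_seq_eta n (x : 'rV[R]_n.+1) : x = rV_seq n.+1 (mkseq (fun k => x 0 (inord k)) n.+1).
Proof. by apply/rowP => j; rewrite mxE nth_mkseq // inord_val. Qed.

Lemma eq_rV_seq n s t : mkseq (nth 0 s) n = mkseq (nth 0 t) n -> rV_seq n s = rV_seq n t.
Proof.
move=> st; apply/rowP => j; rewrite !mxE.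
by rewrite -(nth_mkseq 0 (nth 0 s) (ltn_ord j)) st nth_mkseq.
Qed.

Lemma rV_seq0 n : 0 = rV_seq n (nseq n 0) :> 'rV[R]_n.
Proof. by apply/rowP => j; rewrite !mxE nth_nseq if_same. Qed.

Lemma rV_seq_inord n s k : (k < n.+1)%N -> (rV_seq n.+1 s) 0 (inord k) = s`_k.
Proof. by move=> kn; rewrite mxE inordK. Qed.

Lemma rV_seq_ord0 n s : (rV_seq n.+1 s) 0 ord0 = s`_0.
Proof. by rewrite mxE. Qed.

Lemma rV_seqZ n a s : a *: rV_seq n s = rV_seq n [seq a * x | x <- s].
Proof.
apply/rowP => j; rewrite !mxE.
have [js|js] := ltnP j (size s); first by rewrite (nth_map 0).
by rewrite !nth_default ?size_map ?mulr0.
Qed.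

Lemma rV_seqN n s : - rV_seq n s = rV_seq n [seq - x | x <- s].
Proof.
apply/rowP => j; rewrite !mxE.
have [js|js] := ltnP j (size s); first by rewrite (nth_map 0).
by rewrite !nth_default ?size_map ?oppr0.
Qed.

Lemma rV_seqD n s t : size s = size t ->
  rV_seq n s + rV_seq n t = rV_seq n [seq x.1 + x.2 | x <- zip s t].
Proof.
move=> st; apply/rowP => j; rewrite !mxE.
have [js|js] := ltnP j (size s).
  by rewrite (nth_map 0) ?size_zip -?st ?minnn // nth_zip.
by rewrite !nth_default ?size_map ?size_zip -?st ?minnn ?addr0.
Qed.

Lemma imag_seq n s : imag (rV_seq n.+2 s) = rV_seq n.+1 (behead s).
Proof. by apply/rowP => j; rewrite !mxE /= nth_behead. Qed.

Lemma im_embed_seq n s : im_embed (rV_seq n.+1 s) = rV_seq n.+2 (0 :: s).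
Proof. by apply/rowP => j; rewrite !mxE; case: j => -[|j] //= jn; rewrite mxE inordK. Qed.

Lemma sqnorm_seq n s : size s = n -> sqnorm (rV_seq n s) = \sum_(x <- s) x ^+ 2.
Proof.
move=> <-; rewrite /sqnorm (eq_bigr (fun j : 'I_(size s) => s`_j ^+ 2)) => [|j _].
  by rewrite -(big_mkord xpredT (fun j => s`_j ^+ 2)) -{3}(mkseq_nth 0 s) big_map /index_iota subn0.
by rewrite mxE.
Qed.

Lemma qc_seq s k : (k < 4)%N -> qc (rV_seq 4 s) k = s`_k.
Proof. exact: rV_seq_inord. Qed.

Lemma qmul_seq s t : qmul (rV_seq 4 s) (rV_seq 4 t) = rV_seq 4
  [:: s`_0 * t`_0 - s`_1 * t`_1 - s`_2 * t`_2 - s`_3 * t`_3;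
      s`_0 * t`_1 + s`_1 * t`_0 + s`_2 * t`_3 - s`_3 * t`_2;
      s`_0 * t`_2 - s`_1 * t`_3 + s`_2 * t`_0 + s`_3 * t`_1;
      s`_0 * t`_3 + s`_1 * t`_2 - s`_2 * t`_1 + s`_3 * t`_0].
Proof. by apply/rowP => j; rewrite !mxE /qc !rV_seq_inord. Qed.

Lemma qconj_seq s : qconj (rV_seq 4 s) = rV_seq 4 [:: s`_0; - s`_1; - s`_2; - s`_3].
Proof. by apply/rowP => -[[|[|[|[|//]]]] ?]; rewrite !mxE. Qed.

Lemma ofst_seq s : ofst (rV_seq 8 s) = rV_seq 4 s.
Proof. by apply/rowP => j; rewrite !mxE inordK // (ltn_trans (ltn_ord j)). Qed.

Lemma osnd_seq s : osnd (rV_seq 8 s) = rV_seq 4 (drop 4 s).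
Proof.
apply/rowP => j; rewrite !mxE nth_drop [(j + 4)%N]addnC inordK //.
by rewrite -[8%N]/(4 + 4)%N ltn_add2l.
Qed.

Lemma omk_seq s t : size s = 4 -> omk (rV_seq 4 s) (rV_seq 4 t) = rV_seq 8 (s ++ t).
Proof.
move=> s4; apply/rowP => j; rewrite !mxE nth_cat s4.
case: ifP => j4; rewrite inordK //.
by rewrite ltn_subLR ?(ltn_ord j) // leqNgt j4.
Qed.

End RowSequences.

Definition rV_seq_algE := (qmul_seq, qconj_seq, ofst_seq, osnd_seq, omk_seq).
Definition rV_seqE := (rV_seqZ, rV_seqN, rV_seqD, imag_seq, im_embed_seq, sqnorm_seq, qc_seq,
  rV_seq_inord, rV_seq_ord0, big_cons, big_nil).

(* Proves an identity between polynomial expressions in row vectors: every vector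
   variable is replaced by the row of its coordinates, which are generalized to
   scalars; all operations are then evaluated on explicit rows and the two sides
   are compared entrywise by [ring].  The body of [qmul] is itself an explicit
   row, so generic rules may expand it by conversion (leaving [qc] terms); the
   specific rules are therefore tried first. *)
Ltac rV_ring :=
  intros; rewrite /im_bracket /omul /oconj ?rV_seq0;
  repeat match goal with x : _ |- _ =>
    rewrite (rV_seq_eta x) /mkseq /=; repeat (move: (x 0 (inord _))); clear x end;
  intros; do ![rewrite rV_seq_algE //= | rewrite rV_seqE //=];
  apply: eq_rV_seq; rewrite /mkseq /=; do ![congr (_ :: _)]; try ring.

Section Instances.
Variable R : realType.

Definition cmul (p q : 'rV[R]_2) : 'rV[R]_2 :=
  rV_seq 2 [:: p 0 (inord 0) * q 0 (inord 0) - p 0 (inord 1) * q 0 (inord 1);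
               p 0 (inord 0) * q 0 (inord 1) + p 0 (inord 1) * q 0 (inord 0)].
Definition cconj (p : 'rV[R]_2) : 'rV[R]_2 := rV_seq 2 [:: p 0 (inord 0); - p 0 (inord 1)].

Lemma bracket_heisE n : @bracket_heis R n = row_bracket (im_bracket cmul cconj).
Proof.
apply/funext => v; apply/funext => w; apply/rowP => j.
rewrite ord1 /row_bracket !mxE summxE; apply: eq_bigr => i _.
have ord0E : ord0 = inord 0 :> 'I_2 by apply/val_inj; rewrite /= inordK.
have ord_maxE : ord_max = inord 1 :> 'I_2 by apply/val_inj; rewrite /= inordK.
by rewrite /im_bracket /cmul /cconj !mxE !inordK //= ord0E ord_maxE mulNr.
Qed.

Lemma bracket_qheisE n : @bracket_qheis R n = row_bracket (im_bracket (@qmul R) (@qconj R)).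
Proof.
apply/funext => v; apply/funext => w; apply/rowP => j.
by rewrite /row_bracket [LHS]mxE !summxE; apply: eq_bigr => i _; rewrite [RHS]mxE.
Qed.

Lemma bracket_oheisE : @bracket_oheis R = row_bracket (n := 1) (im_bracket (@omul R) (@oconj R)).
Proof.
apply/funext => v; apply/funext => w.
have row_id (x : 'rV[R]_8) : row 0 x = x by apply/rowP => j; rewrite mxE.
by rewrite /row_bracket big_ord1 !row_id.
Qed.

Lemma heis_aut n : (0 < n)%N -> aut_central_times_lie (@mul_heis R n) (@inv_heis R n).
Proof.
move=> n_gt0; rewrite /mul_heis bracket_heisE.
by apply: im_bracket_aut_central_times_lie => //; try split; rewrite /cmul /cconj; rV_ring.
Qed.

Lemma qheis_aut n : (0 < n)%N -> aut_central_times_lie (@mul_qheis R n) (@inv_qheis R n).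
Proof.
move=> n_gt0; rewrite /mul_qheis bracket_qheisE.
by apply: im_bracket_aut_central_times_lie => //; try split; rV_ring.
Qed.

Lemma oheis_aut : aut_central_times_lie (@mul_oheis R) (@inv_oheis R).
Proof.
rewrite /mul_oheis bracket_oheisE.
by apply: im_bracket_aut_central_times_lie => //; try split; rV_ring.
Qed.

End Instances.

Lemma abelian_aut (R : realType) n :
  aut_central_times_lie (@mul_abelian R n) (@inv_abelian R n).
Proof.
apply: abelian_aut_central_times_lie => x y.
by rewrite /mul_abelian /nil2_mul /bracket_abelian scaler0 !addr0 addrC [x.2 + _]addrC.
Qed.

Theorem theoremC (R : realType) :
  (forall n : nat, (0 < n)%N ->
     aut_central_times_lie
       (@mul_abelian R n) (@inv_abelian R n)) /\
  (forall n : nat, (0 < n)%N ->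
     aut_central_times_lie (T := ('M[R]_(n, 2) * 'rV[R]_1)%type)
       (@mul_heis R n) (@inv_heis R n)) /\
  (forall n : nat, (0 < n)%N ->
     aut_central_times_lie (T := ('M[R]_(n, 4) * 'rV[R]_3)%type)
       (@mul_qheis R n) (@inv_qheis R n)) /\
  aut_central_times_lie
     (@mul_oheis R) (@inv_oheis R).
Proof.
split; [by move=> n _; exact: abelian_aut | split; [|split]].
- exact: heis_aut.
- exact: qheis_aut.
- exact: oheis_aut.
Qed.
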